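(* Let $\mathsf H$ be a horizontal connection on $\mathsf q_M$. Then the map $\nabla_{\mathsf H}:M\to\Omega(A)\otimes_AM$, $\nabla_{\mathsf H}(m):=\mathsf H(\mathsf d(m))$ (which lands in $\Omega(A)\otimes_AM\subseteq\mathsf T(A)\otimes_A\mathsf S_A(M)$), is a module connection on $M$.
   Context: Fix a commutative ring $R$, a commutative $R$-algebra $A$ and an $A$-module $M$. ''Algebra'' means commutative $R$-algebra and ''algebra map'' means $R$-algebra homomorphism. $\Omega(A)$ is the $A$-module of Kähler differentials of $A$ over $R$, with universal derivation $\mathsf d:A\to\Omega(A)$. A (module) connection on $M$ is an $R$-linear map $\nabla:M\to\Omega(A)\otimes_AM$ such that $\nabla(am)=a\nabla(m)+\mathsf d(a)\otimes_Am$ for all $a\in A$, $m\in M$. Tangent algebras: for an algebra $B$, $\mathsf T(B):=\mathrm{Sym}_B(\Omega(B))$, i.e. the $B$-algebra generated by symbols $\mathsf d(b)$ ($b\in B$) subject to $\mathsf d(b+b')=\mathsf d(b)+\mathsf d(b')$, $\mathsf d(bb')=b\,\mathsf d(b')+b'\,\mathsf d(b)$, $\mathsf d(r1)=0$ ($r\in R$). An algebra map out of $\mathsf T(B)$ is determined by its values on the generators $b$, $\mathsf d(b)$. Write $\mathsf T^2(B)=\mathsf T(\mathsf T(B))$ and denote the universal derivation $\mathsf T(B)\to\mathsf T^2(B)$ by $\mathsf d'$; so $\mathsf T^2(B)$ is generated over $B$ by $\mathsf d(b),\mathsf d'(b),\mathsf d'\mathsf d(b)$. For an algebra map $h:X\to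 Y$, $\mathsf T(h):\mathsf T(X)\to\mathsf T(Y)$ sends $x\mapsto h(x)$ and $\delta_X(x)\mapsto\delta_Y(h(x))$, where $\delta$ denotes the relevant universal derivation ($\mathsf d$ for $B\to\mathsf T(B)$, $\mathsf d'$ for $\mathsf T(B)\to\mathsf T^2(B)$). Algebra maps defined on generators $b\in B$: $\mathsf p_B:B\to\mathsf T(B)$ the inclusion; $0_B:\mathsf T(B)\to B$, $b\mapsto b$, $\mathsf d(b)\mapsto 0$; $\ell_B:\mathsf T^2(B)\to\mathsf T(B)$, $b\mapsto b$, $\mathsf d(b)\mapsto 0$, $\mathsf d'(b)\mapsto0$, $\mathsf d'\mathsf d(b)\mapsto\mathsf d(b)$; $\mathsf c_B:\mathsf T^2(B)\to\mathsf T^2(B)$, $b\mapsto b$, $\mathsf d(b)\mapsto\mathsf d'(b)$, $\mathsf d'(b)\mapsto\mathsf d(b)$, $\mathsf d'\mathsf d(b)\mapsto\mathsf d'\mathsf d(b)$. (These are, read in algebras, the structure maps of the Rosický tangent structure on affine schemes over $R$, i.e. on the opposite of the category of commutative $R$-algebras.) Differential bundle of $M$: $\mathsf S_A(M)$ is the symmetric $A$-algebra on $M$ (generated by $a\in A$, $m\in M$). Algebra maps: $\mathsf q_M:A\to\mathsf S_A(M)$ the inclusion; $\lambda_M:\mathsf T(\mathsf S_A(M))\to\mathsf S_A(M)$, $a\mapsto a$, $m\mapsto0$, $\mathsf d(a)\mapsto 0$, $\mathsf d(m)\mapsto m$. A horizontal connection on $\mathsf q_M$ is an algebra map $\mathsf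 H:\mathsf T(\mathsf S_A(M))\to\mathsf T(A)\otimes_A\mathsf S_A(M)$ such that (H1) $\mathsf H(\mathsf T(\mathsf q_M)(w))=w\otimes1$ for all $w\in\mathsf T(A)$; (H2) $\mathsf H(v)=1\otimes v$ for all $v\in\mathsf S_A(M)$; (H3) $(\ell_A\otimes0_{\mathsf S_A(M)})\circ\theta\circ\mathsf T(\mathsf H)=\mathsf H\circ\ell_{\mathsf S_A(M)}$; (H4) $(0_{\mathsf T(A)}\otimes\lambda_M)\circ\theta\circ\mathsf T(\mathsf H)=\mathsf H\circ\mathsf T(\lambda_M)\circ\mathsf c_{\mathsf S_A(M)}$. Here $\mathsf T^2(A)\otimes_{\mathsf T(A)}\mathsf T(\mathsf S_A(M))$ is formed via $\mathsf T(\mathsf p_A):\mathsf T(A)\to\mathsf T^2(A)$ ($a\mapsto a$, $\mathsf d(a)\mapsto\mathsf d'(a)$) and $\mathsf T(\mathsf q_M)$; $\theta:\mathsf T(\mathsf T(A)\otimes_A\mathsf S_A(M))\to\mathsf T^2(A)\otimes_{\mathsf T(A)}\mathsf T(\mathsf S_A(M))$ is the canonical isomorphism, $w\otimes v\mapsto w\otimes v$, $\mathsf d(w\otimes v)\mapsto\mathsf d'(w)\otimes v+w\otimes\mathsf d(v)$; the maps $\ell_A\otimes0_{\mathsf S_A(M)}$ and $0_{\mathsf T(A)}\otimes\lambda_M$ into $\mathsf T(A)\otimes_A\mathsf S_A(M)$ are induced factorwise, where $0_{\mathsf T(A)}:\mathsf T^2(A)\to\mathsf T(A)$ sends $a\mapsto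 a$, $\mathsf d(a)\mapsto\mathsf d(a)$, $\mathsf d'(a)\mapsto0$, $\mathsf d'\mathsf d(a)\mapsto0$. *)

From HB Require Import structures.
From mathcomp Require Import all_boot all_algebra.
From mathcomp Require Import boolp.

Set Implicit Arguments.
Unset Strict Implicit.
Unset Printing Implicit Defensive.
Import GRing.Theory.
Local Open Scope ring_scope.

Section Presented.
Variables (R : comPzRingType) (G : Type).

Inductive term : Type :=
| tvar of G | tcst of R | tadd of term & term | tmul of term & term | topp of term.

Variable rel : term -> term -> Prop.

Inductive cong : term -> term -> Prop :=
| c_refl t : cong t t
| c_sym t u : cong t u -> cong u t
| c_trans t u w : cong t u -> cong u w -> cong t w
| c_add t t' u u' : cong t t' -> cong u u' -> cong (tadd t u) (tadd t' u')
| c_mul t t' u u' : cong t t' -> cong u u' -> cong (tmul t u) (tmul t' u')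
| c_opp t t' : cong t t' -> cong (topp t) (topp t')
| c_addA t u w : cong (tadd t (tadd u w)) (tadd (tadd t u) w)
| c_addC t u : cong (tadd t u) (tadd u t)
| c_add0 t : cong (tadd (tcst 0) t) t
| c_addN t : cong (tadd (topp t) t) (tcst 0)
| c_mulA t u w : cong (tmul t (tmul u w)) (tmul (tmul t u) w)
| c_mulC t u : cong (tmul t u) (tmul u t)
| c_mul1 t : cong (tmul (tcst 1) t) t
| c_mulDl t u w : cong (tmul (tadd t u) w) (tadd (tmul t w) (tmul u w))
| c_cadd r s : cong (tcst (r + s)) (tadd (tcst r) (tcst s))
| c_cmul r s : cong (tcst (r * s)) (tmul (tcst r) (tcst s))
| c_rel t u : rel t u -> cong t u.

Definition pres : Type := {P : term -> Prop | exists t, P = cong t}.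
HB.instance Definition _ := gen_eqMixin pres.
HB.instance Definition _ := gen_choiceMixin pres.

Definition pi (t : term) : pres := exist _ (cong t) (ex_intro _ t erefl).
Definition repr (q : pres) : term := proj1_sig (cid (proj2_sig q)).

Lemma reprK q : pi (repr q) = q.
Proof.
case: q => P HP; rewrite /repr /pi /=.
case: (cid HP) => t /= Pt; subst P.
by congr exist; apply: Prop_irrelevance.
Qed.

Lemma sig_eq (P Q : term -> Prop) (p : exists t, P = cong t)
  (q : exists t, Q = cong t) : P = Q -> exist _ P p = exist _ Q q :> pres.
Proof. by move=> E; subst Q; congr exist; apply: Prop_irrelevance. Qed.

Lemma eq_pi t u : cong t u -> pi t = pi u.
Proof.
move=> tu; apply: sig_eq.
apply: funext => w; apply: propext; split => h.
  exact: c_trans (c_sym tu) h.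
exact: c_trans tu h.
Qed.

Lemma pi_cong t u : pi t = pi u -> cong t u.
Proof. by move=> /(congr1 (@proj1_sig _ _)) /= ->; apply: c_refl. Qed.

Lemma repr_cong t : cong (repr (pi t)) t.
Proof. by apply: pi_cong; rewrite reprK. Qed.

Lemma piP q : exists t, q = pi t.
Proof. by exists (repr q); rewrite reprK. Qed.

Definition pzero := pi (tcst 0).
Definition pone := pi (tcst 1).
Definition padd q q' := pi (tadd (repr q) (repr q')).
Definition pmul q q' := pi (tmul (repr q) (repr q')).
Definition popp q := pi (topp (repr q)).

Lemma paddE t u : padd (pi t) (pi u) = pi (tadd t u).
Proof. by apply: eq_pi; apply: c_add; apply: repr_cong. Qed.
Lemma pmulE t u : pmul (pi t) (pi u) = pi (tmul t u).
Proof. by apply: eq_pi; apply: c_mul; apply: repr_cong. Qed.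
Lemma poppE t : popp (pi t) = pi (topp t).
Proof. by apply: eq_pi; apply: c_opp; apply: repr_cong. Qed.

Lemma paddA : associative padd.
Proof.
move=> x y z; case: (piP x) (piP y) (piP z) => [t ->] [u ->] [w ->].
by rewrite !paddE; apply: eq_pi; apply: c_addA.
Qed.
Lemma paddC : commutative padd.
Proof.
move=> x y; case: (piP x) (piP y) => [t ->] [u ->].
by rewrite !paddE; apply: eq_pi; apply: c_addC.
Qed.
Lemma padd0 : left_id pzero padd.
Proof.
move=> x; case: (piP x) => [t ->].
by rewrite paddE; apply: eq_pi; apply: c_add0.
Qed.
Lemma paddN : left_inverse pzero popp padd.
Proof.
move=> x; case: (piP x) => [t ->].
by rewrite poppE paddE; apply: eq_pi; apply: c_addN.
Qed.

HB.instance Definition _ := GRing.isZmodule.Build pres paddA paddC padd0 paddN.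

Lemma pmulA : associative pmul.
Proof.
move=> x y z; case: (piP x) (piP y) (piP z) => [t ->] [u ->] [w ->].
by rewrite !pmulE; apply: eq_pi; apply: c_mulA.
Qed.
Lemma pmulC : commutative pmul.
Proof.
move=> x y; case: (piP x) (piP y) => [t ->] [u ->].
by rewrite !pmulE; apply: eq_pi; apply: c_mulC.
Qed.
Lemma pmul1 : left_id pone pmul.
Proof.
move=> x; case: (piP x) => [t ->].
by rewrite pmulE; apply: eq_pi; apply: c_mul1.
Qed.
Lemma pmulDl : left_distributive pmul padd.
Proof.
move=> x y z; case: (piP x) (piP y) (piP z) => [t ->] [u ->] [w ->].
rewrite paddE !pmulE paddE; apply: eq_pi; apply: c_mulDl.
Qed.

HB.instance Definition _ := GRing.Zmodule_isComPzRing.Build pres pmulA pmulC pmul1 pmulDl.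

Definition pgen (g : G) : pres := pi (tvar g).
Definition pcst (r : R) : pres := pi (tcst r).

End Presented.

Section Alg.
Variable R : comPzRingType.

Record ralg := RAlg { ralg_sort :> comPzRingType; inR : R -> ralg_sort }.

Definition alghom (X Y : ralg) (f : X -> Y) : Prop :=
  [/\ forall x y, f (x + y) = f x + f y,
      forall x y, f (x * y) = f x * f y,
      f 1 = 1 &
      forall r, f (inR X r) = inR Y r].

(** the algebra map characterised by the property P (e.g. by its values on
    generators); this is well defined whenever such a map exists and is unique *)
Definition the_hom (X Y : ralg) (P : (X -> Y) -> Prop) : X -> Y :=
  match pselect (exists f, alghom f /\ P f) with
  | left e => proj1_sig (cid e)
  | right _ => fun _ => 0
  end.

Definition presAlg G (rel : term R G -> term R G -> Prop) : ralg :=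
  @RAlg (pres rel) (@pcst R G rel).

(** Tangent algebra T(B) = Sym_B(Omega(B)), generated by b and d(b) *)
Section Tangent.
Variable B : ralg.
Local Notation tv x := (tvar R x).
Inductive T_rel : term R (B + B) -> term R (B + B) -> Prop :=
| T_add b b' : T_rel (tv (inl (b + b'))) (tadd (tv (inl b)) (tv (inl b')))
| T_mul b b' : T_rel (tv (inl (b * b'))) (tmul (tv (inl b)) (tv (inl b')))
| T_cst r : T_rel (tv (inl (inR B r))) (tcst _ r)
| T_dadd b b' : T_rel (tv (inr (b + b'))) (tadd (tv (inr b)) (tv (inr b')))
| T_dmul b b' : T_rel (tv (inr (b * b')))
     (tadd (tmul (tv (inl b)) (tv (inr b'))) (tmul (tv (inl b')) (tv (inr b))))
| T_dcst r : T_rel (tv (inr (inR B r))) (tcst _ 0).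

Definition Tan : ralg := presAlg T_rel.
Definition pT (b : B) : Tan := pgen T_rel (inl b).
Definition dT (b : B) : Tan := pgen T_rel (inr b).
End Tangent.

Definition Tmap (X Y : ralg) (h : X -> Y) : Tan X -> Tan Y :=
  the_hom (fun f => forall x, f (pT x) = pT (h x) /\ f (dT x) = dT (h x)).

Definition zeroT (B : ralg) : Tan B -> B :=
  the_hom (fun f => forall b, f (pT b) = b /\ f (dT b) = 0).

(** in T^2(B) = T(T(B)):  b = pT (pT b), d(b) = pT (dT b),
    d'(b) = dT (pT b), d'd(b) = dT (dT b) *)
Definition ellT (B : ralg) : Tan (Tan B) -> Tan B :=
  the_hom (fun f => forall b,
    [/\ f (pT (pT b)) = pT b, f (pT (dT b)) = 0,
        f (dT (pT b)) = 0 & f (dT (dT b)) = dT b]).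

Definition cT (B : ralg) : Tan (Tan B) -> Tan (Tan B) :=
  the_hom (fun f => forall b,
    [/\ f (pT (pT b)) = pT (pT b), f (pT (dT b)) = dT (pT b),
        f (dT (pT b)) = pT (dT b) & f (dT (dT b)) = dT (dT b)]).

(** Tensor product X (x)_B Y of algebras, formed via fX : B -> X, fY : B -> Y *)
Section Tensor.
Variables (B X Y : ralg) (fX : B -> X) (fY : B -> Y).
Local Notation tv x := (tvar R x).
Inductive Tens_rel : term R (X + Y) -> term R (X + Y) -> Prop :=
| TX_add x x' : Tens_rel (tv (inl (x + x'))) (tadd (tv (inl x)) (tv (inl x')))
| TX_mul x x' : Tens_rel (tv (inl (x * x'))) (tmul (tv (inl x)) (tv (inl x')))
| TX_cst r : Tens_rel (tv (inl (inR X r))) (tcst _ r)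
| TY_add y y' : Tens_rel (tv (inr (y + y'))) (tadd (tv (inr y)) (tv (inr y')))
| TY_mul y y' : Tens_rel (tv (inr (y * y'))) (tmul (tv (inr y)) (tv (inr y')))
| TY_cst r : Tens_rel (tv (inr (inR Y r))) (tcst _ r)
| T_bal b : Tens_rel (tv (inl (fX b))) (tv (inr (fY b))).

Definition Tens : ralg := presAlg Tens_rel.
Definition tens (x : X) (y : Y) : Tens :=
  pgen Tens_rel (inl x) * pgen Tens_rel (inr y).
End Tensor.

Definition tensmap (B X Y B' X' Y' : ralg) (fX : B -> X) (fY : B -> Y)
  (fX' : B' -> X') (fY' : B' -> Y') (g : X -> X') (h : Y -> Y') :
  Tens fX fY -> Tens fX' fY' :=
  the_hom (fun f => forall x y, f (tens fX fY x y) = tens fX' fY' (g x) (h y)).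

End Alg.

Section Sym.
Variables (R : comPzRingType) (A : comPzRingType) (iA : {rmorphism R -> A})
  (M : lmodType A).
Definition AlgA : ralg R := @RAlg R A iA.
Local Notation tv x := (tvar R x).
Inductive S_rel : term R (A + M) -> term R (A + M) -> Prop :=
| S_add a a' : S_rel (tv (inl (a + a'))) (tadd (tv (inl a)) (tv (inl a')))
| S_mul a a' : S_rel (tv (inl (a * a'))) (tmul (tv (inl a)) (tv (inl a')))
| S_cst r : S_rel (tv (inl (iA r))) (tcst _ r)
| S_madd m m' : S_rel (tv (inr (m + m'))) (tadd (tv (inr m)) (tv (inr m')))
| S_scale a m : S_rel (tv (inr (a *: m))) (tmul (tv (inl a)) (tv (inr m))).

Definition SymA : ralg R := presAlg S_rel.
Definition qM (a : AlgA) : SymA := pgen S_rel (inl a).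
Definition sM (m : M) : SymA := pgen S_rel (inr m).

Definition lambdaM : Tan SymA -> SymA :=
  the_hom (fun f => (forall a, f (pT (qM a)) = qM a /\ f (dT (qM a)) = 0) /\
                    (forall m, f (pT (sM m)) = 0 /\ f (dT (sM m)) = sM m)).

Definition pA : AlgA -> Tan AlgA := @pT R AlgA.
Definition dA : AlgA -> Tan AlgA := @dT R AlgA.
Definition TpA : Tan AlgA -> Tan (Tan AlgA) := Tmap pA.
Definition TqM : Tan AlgA -> Tan SymA := Tmap qM.

Definition TAS : ralg R := Tens pA qM.
Definition T2ATS : ralg R :=
  Tens TpA TqM.

Definition thetaM : Tan TAS -> T2ATS :=
  the_hom (fun f => forall (w : Tan AlgA) (v : SymA),
    f (pT (tens pA qM w v)) =
      tens TpA TqM (pT w) (pT v) /\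
    f (dT (tens pA qM w v)) =
      tens TpA TqM (dT w) (pT v) +
      tens TpA TqM (pT w) (dT v)).

Definition ell_tens_zero : T2ATS -> TAS :=
  @tensmap R (Tan AlgA) (Tan (Tan AlgA)) (Tan SymA) AlgA (Tan AlgA) SymA
    TpA TqM pA qM
          (@ellT R AlgA) (@zeroT R SymA).
Definition zero_tens_lambda : T2ATS -> TAS :=
  @tensmap R (Tan AlgA) (Tan (Tan AlgA)) (Tan SymA) AlgA (Tan AlgA) SymA
    TpA TqM pA qM
          (@zeroT R (Tan AlgA)) lambdaM.

Definition horizontal_connection (H : Tan SymA -> TAS) : Prop :=
  [/\ alghom H,
      forall w : Tan AlgA,
        H (TqM w) = tens pA qM w 1,
      forall v : SymA, H (pT v) = tens pA qM 1 v,
      forall x : Tan (Tan SymA),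
        ell_tens_zero (thetaM (Tmap H x)) = H (@ellT R SymA x) &
      forall x : Tan (Tan SymA),
        zero_tens_lambda (thetaM (Tmap H x)) = H (Tmap lambdaM (@cT R SymA x))].

(** Omega(A) (x)_A M, viewed (as in the paper) inside T(A) (x)_A S_A(M):
    the image of the canonical map, i.e. all finite sums of a d(a') (x) m *)
Definition OmegaTensM (x : TAS) : Prop :=
  exists s : seq (A * A * M),
    x = \sum_(i <- s) tens pA qM (pA i.1.1 * dA i.1.2) (sM i.2).

Definition actA (a : A) (x : TAS) : TAS := tens pA qM (pA a) 1 * x.

Definition module_connection (nabla : M -> TAS) : Prop :=
  [/\ forall m, OmegaTensM (nabla m),
      forall m m', nabla (m + m') = nabla m + nabla m',
      forall r m, nabla (iA r *: m) = inR TAS r * nabla m &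
      forall a m, nabla (a *: m) =
        actA a (nabla m) + tens pA qM (dA a) (sM m)].

End Sym.

From Pilot Require Import Defs.
From HB Require Import structures.
From mathcomp Require Import all_boot all_algebra.
From mathcomp Require Import boolp.
From mathcomp Require Import ring.

(* Additivity and the Leibniz rule of nabla come directly from those of d and
   from (H1), (H2): H(d(a m)) = H(a) H(d m) + H(d a) H(m) = a nabla(m) + d a (x) m.
   The content of the theorem is that nabla(m) lies in Omega(A) (x)_A M.  Applying
   (H3) and (H4) to d'd(m), and using that T(H) commutes with d, shows that nabla(m)
   is fixed by both L := (l_A (x) 0) o theta o d and Lam := (0 (x) lambda_M) o theta o d,
   so nabla(m) = Lam(L(nabla(m))).  On a pure tensor Lam(L(w (x) v)) = l(d'w) (x) lambda(dv),
   where l o d' lands in Omega(A) and lambda o d in M; since L and Lam are derivations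
   along homomorphisms, a second-order Leibniz rule propagates this from generators to
   the whole algebra.  The structure maps, defined by their values on generators, exist
   because a homomorphism and a derivation along it lift together out of a presented
   algebra. *)

Set Implicit Arguments. Unset Strict Implicit. Unset Printing Implicit Defensive.
Import GRing.Theory.
Local Open Scope ring_scope.

Section AlgebraMaps.
Variable R : comPzRingType.

Definition inR_rmorph (Y : ralg R) : Prop :=
  [/\ forall r s, inR Y (r + s) = inR Y r + inR Y s,
      forall r s, inR Y (r * s) = inR Y r * inR Y s & inR Y 1 = 1].

Definition derivation (X Y : ralg R) (f D : X -> Y) : Prop :=
  [/\ forall x y, D (x + y) = D x + D y,
      forall x y, D (x * y) = f x * D y + D x * f y & forall r, D (inR X r) = 0].

(* The Leibniz rule of a composite e o d of derivations, see [derivation2_comp]. *)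
Definition derivation2 (X Y : ralg R) (f D1 D2 F : X -> Y) : Prop :=
  [/\ forall x y, F (x + y) = F x + F y,
      forall x y, F (x * y) = f x * F y + D1 x * D2 y + D2 x * D1 y + F x * f y &
      forall r, F (inR X r) = 0].

Section Laws.
Variables (X Y : ralg R).

Lemma inR0 : inR_rmorph Y -> inR Y 0 = 0.
Proof. by case=> inRD _ _; apply: (@addrI _ (inR Y 0)); rewrite -inRD !addr0. Qed.

Lemma inRN1 : inR_rmorph Y -> inR Y (-1) = -1.
Proof.
move=> hY; have [inRD _ inR1] := hY.
by apply: (@addIr _ 1); rewrite -[in LHS]inR1 -inRD !addNr inR0.
Qed.

Variable f : X -> Y.
Hypothesis hf : alghom f.

Lemma alghomD x y : f (x + y) = f x + f y. Proof. by case: hf. Qed.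
Lemma alghomM x y : f (x * y) = f x * f y. Proof. by case: hf. Qed.
Lemma alghom1 : f 1 = 1. Proof. by case: hf. Qed.
Lemma alghomR r : f (inR X r) = inR Y r. Proof. by case: hf. Qed.
Lemma alghom0 : f 0 = 0.
Proof. by apply: (@addrI _ (f 0)); rewrite -alghomD !addr0. Qed.

Variable D : X -> Y.
Hypothesis hD : derivation f D.

Lemma derivationD x y : D (x + y) = D x + D y. Proof. by case: hD. Qed.
Lemma derivationM x y : D (x * y) = f x * D y + D x * f y. Proof. by case: hD. Qed.
Lemma derivationR r : D (inR X r) = 0. Proof. by case: hD. Qed.
Lemma derivation0 : D 0 = 0.
Proof. by apply: (@addrI _ (D 0)); rewrite -derivationD !addr0. Qed.

End Laws.

Lemma alghom_id (X : ralg R) : alghom (@id X).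
Proof. by []. Qed.

Lemma alghom_comp (X Y Z : ralg R) (f : X -> Y) (g : Y -> Z) :
  alghom f -> alghom g -> alghom (g \o f).
Proof.
move=> hf hg; split=> /= *;
  by rewrite ?(alghomD hf, alghomM hf, alghom1 hf, alghomR hf);
     rewrite ?(alghomD hg, alghomM hg, alghom1 hg, alghomR hg).
Qed.

Lemma derivation_zero (X Y : ralg R) (f : X -> Y) : derivation f (fun _ => 0).
Proof. by split=> *; rewrite ?mulr0 ?mul0r ?addr0. Qed.

Lemma derivation_comp_hom (X Y Z : ralg R) (g : X -> Y) (f D : Y -> Z) :
  alghom g -> derivation f D -> derivation (f \o g) (D \o g).
Proof.
move=> hg hD; split=> /= *;
  by rewrite ?(alghomD hg, alghomM hg, alghomR hg);
     rewrite ?(derivationD hD, derivationM hD, derivationR hD).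
Qed.

Lemma hom_comp_derivation (X Y Z : ralg R) (f D : X -> Y) (g : Y -> Z) :
  alghom g -> derivation f D -> derivation (g \o f) (g \o D).
Proof.
move=> hg hD; split=> /= *;
  by rewrite ?(derivationD hD, derivationM hD, derivationR hD);
     rewrite ?(alghomD hg, alghomM hg, alghom0 hg).
Qed.

Lemma derivation2_comp (X Y Z : ralg R) (f d : X -> Y) (g e : Y -> Z) :
  derivation f d -> derivation g e ->
  derivation2 (g \o f) (e \o f) (g \o d) (e \o d).
Proof.
move=> hd he; split=> /= [x y|x y|r].
- by rewrite (derivationD hd) (derivationD he).
- by rewrite (derivationM hd) (derivationD he) !(derivationM he) addrA.
- by rewrite (derivationR hd) (derivation0 he).
Qed.

Lemma derivation2_of_derivation (X Y : ralg R) (f D : X -> Y) :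
  derivation f D -> derivation2 f (fun _ => 0) (fun _ => 0) D.
Proof.
move=> hD; split=> [x y|x y|r]; first exact: (derivationD hD).
  by rewrite (derivationM hD) mulr0 !addr0.
exact: (derivationR hD).
Qed.

Lemma the_homP (X Y : ralg R) (P : (X -> Y) -> Prop) :
  (exists f, alghom f /\ P f) -> alghom (the_hom P) /\ P (the_hom P).
Proof.
move=> e; rewrite /the_hom; case: pselect => [e'|//].
by case: (cid e') => f /= [].
Qed.

End AlgebraMaps.

Section Presentation.
Variables (R : comPzRingType) (G : Type) (rel : term R G -> term R G -> Prop).
Local Notation P := (presAlg rel).

Lemma piD t u : Defs.pi rel (tadd t u) = Defs.pi rel t + Defs.pi rel u.
Proof. by rewrite -paddE. Qed.
Lemma piM t u : Defs.pi rel (tmul t u) = Defs.pi rel t * Defs.pi rel u.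
Proof. by rewrite -pmulE. Qed.
Lemma piN t : Defs.pi rel (topp t) = - Defs.pi rel t.
Proof. by rewrite -poppE. Qed.

Lemma presAlg_rmorph : inR_rmorph P.
Proof.
split=> [r s|r s|//].
  by rewrite /= /pcst -piD; apply: Defs.eq_pi; apply: c_cadd.
by rewrite /= /pcst -piM; apply: Defs.eq_pi; apply: c_cmul.
Qed.

Lemma pres_ind (Q : P -> Prop) :
  (forall g, Q (pgen rel g)) -> (forall r, Q (inR P r)) ->
  (forall x y, Q x -> Q y -> Q (x + y)) -> (forall x y, Q x -> Q y -> Q (x * y)) ->
  forall x, Q x.
Proof.
move=> Qg Qc QD QM x; case: (Defs.piP x) => t ->.
elim: t => [g|r|t Qt u Qu|t Qt u Qu|t Qt]; first exact: Qg; first exact: Qc.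
- by rewrite piD; apply: QD.
- by rewrite piM; apply: QM.
by rewrite piN -mulN1r -(inRN1 presAlg_rmorph); apply: QM.
Qed.

Lemma alghom_pres_eq (Y : ralg R) (f g : P -> Y) : alghom f -> alghom g ->
  (forall x, f (pgen rel x) = g (pgen rel x)) -> forall x, f x = g x.
Proof.
move=> hf hg E; elim/pres_ind => [//|r|x y ex ey|x y ex ey].
- by rewrite (alghomR hf) (alghomR hg).
- by rewrite (alghomD hf) (alghomD hg) ex ey.
- by rewrite (alghomM hf) (alghomM hg) ex ey.
Qed.

(* A term is evaluated together with its formal derivative, so that a
   homomorphism and a derivation along it are lifted in a single pass. *)
Section Lift.
Variables (Y : ralg R) (v dv : G -> Y).

Fixpoint term_val t := match t with
  | tvar g => v g | tcst r => inR Y r | tadd t u => term_val t + term_val u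
  | tmul t u => term_val t * term_val u | topp t => - term_val t end.
Fixpoint term_der t := match t with
  | tvar g => dv g | tcst _ => 0 | tadd t u => term_der t + term_der u
  | tmul t u => term_val t * term_der u + term_der t * term_val u
  | topp t => - term_der t end.

Hypothesis hY : inR_rmorph Y.
Hypothesis hrel : forall t u, rel t u ->
  term_val t = term_val u /\ term_der t = term_der u.

Lemma term_val_der_cong t u : cong rel t u ->
  term_val t = term_val u /\ term_der t = term_der u.
Proof.
have [inRD inRM inR1] := hY.
elim=> {t u} /=.
- by [].
- by move=> t u _ [-> ->].
- by move=> t u w _ [-> ->] _ [-> ->].
- by move=> t t' u u' _ [-> ->] _ [-> ->].
- by move=> t t' u u' _ [-> ->] _ [-> ->].
- by move=> t t' _ [-> ->].
- by move=> t u w; rewrite !addrA.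
- by move=> t u; rewrite addrC [term_der u + _]addrC.
- by move=> t; rewrite (inR0 hY) !add0r.
- by move=> t; rewrite (inR0 hY) !addNr.
- by move=> t u w; split; ring.
- by move=> t u; split; ring.
- by move=> t; rewrite inR1; split; ring.
- by move=> t u w; split; ring.
- by move=> r s; rewrite inRD addr0.
- by move=> r s; rewrite inRM; split; ring.
- exact: hrel.
Qed.

Lemma presAlg_lift : exists f D : P -> Y, [/\ alghom f, derivation f D &
  forall g, f (pgen rel g) = v g /\ D (pgen rel g) = dv g].
Proof.
exists (fun q => term_val (Defs.repr q)), (fun q => term_der (Defs.repr q)).
have E t : term_val (Defs.repr (Defs.pi rel t)) = term_val t /\
           term_der (Defs.repr (Defs.pi rel t)) = term_der t.
  exact: term_val_der_cong (repr_cong rel t).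
split=> [||g]; last exact: E.
- split=> [x y|x y||r].
  + case: (Defs.piP x) (Defs.piP y) => [t ->] [u ->].
    by rewrite -piD !(proj1 (E _)).
  + case: (Defs.piP x) (Defs.piP y) => [t ->] [u ->].
    by rewrite -piM !(proj1 (E _)).
  + by have [_ _ <-] := hY; exact: (proj1 (E (tcst _ 1))).
  + exact: (proj1 (E _)).
- split=> [x y|x y|r].
  + case: (Defs.piP x) (Defs.piP y) => [t ->] [u ->].
    by rewrite -piD !(proj2 (E _)).
  + case: (Defs.piP x) (Defs.piP y) => [t ->] [u ->].
    by rewrite -piM !(proj1 (E _)) !(proj2 (E _)).
  + exact: (proj2 (E _)).
Qed.

End Lift.
End Presentation.

Section Tangent.
Variable R : comPzRingType.

Lemma pT_hom (B : ralg R) : inR_rmorph B -> alghom (@pT R B).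
Proof.
case=> _ _ inR1; split.
- by move=> x y; rewrite /pT /pgen (Defs.eq_pi (c_rel (T_add x y))) piD.
- by move=> x y; rewrite /pT /pgen (Defs.eq_pi (c_rel (T_mul x y))) piM.
- by rewrite -inR1 /pT /pgen (Defs.eq_pi (c_rel (T_cst _ 1))).
- by move=> r; rewrite /pT /pgen (Defs.eq_pi (c_rel (T_cst _ r))).
Qed.

Lemma dT_der (B : ralg R) : derivation (@pT R B) (@dT R B).
Proof.
split.
- by move=> x y; rewrite /dT /pgen (Defs.eq_pi (c_rel (T_dadd x y))) piD.
- move=> x y; rewrite /dT /pgen (Defs.eq_pi (c_rel (T_dmul x y))) piD !piM.
  by rewrite [_ * Defs.pi _ (tvar _ (inl y))]mulrC.
- by move=> r; rewrite /dT /pgen (Defs.eq_pi (c_rel (T_dcst _ r))).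
Qed.

Lemma Tan_lift_hom_der (B Y : ralg R) (h1 h2 d1 d2 : B -> Y) : inR_rmorph Y ->
  alghom h1 -> derivation h1 h2 -> derivation h1 d1 -> derivation2 h1 h2 d1 d2 ->
  exists f D, [/\ alghom (X := Tan B) f, derivation f D &
    forall b, [/\ f (pT b) = h1 b, f (dT b) = h2 b, D (pT b) = d1 b & D (dT b) = d2 b]].
Proof.
move=> hY hh1 hh2 hd1 [d2D d2M d2R].
pose v z := match z with inl b => h1 b | inr b => h2 b end.
pose dv z := match z with inl b => d1 b | inr b => d2 b end.
have [|f [D [hf hD fD]]] := @presAlg_lift _ _ (@T_rel R B) Y v dv hY.
  move=> t u [] b * /=; split; rewrite ?(inR0 hY);
  rewrite ?(alghomD hh1, alghomM hh1, alghomR hh1, derivationD hh2, derivationM hh2,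
    derivationR hh2, derivationD hd1, derivationM hd1, derivationR hd1, d2D, d2M, d2R);
  by [|ring].
exists f, D; split=> // b.
by case: (fD (inl b)) (fD (inr b)) => ? ? [? ?].
Qed.

Lemma Tan_lift_hom (B Y : ralg R) (h d : B -> Y) : inR_rmorph Y ->
  alghom h -> derivation h d ->
  exists f, alghom (X := Tan B) f /\ forall b, f (pT b) = h b /\ f (dT b) = d b.
Proof.
move=> hY hh hd.
have [|f [D [hf _ fD]]] := @Tan_lift_hom_der B Y h d (fun _ => 0) (fun _ => 0) hY hh hd
  (derivation_zero h).
  by split=> *; rewrite ?mulr0 ?mul0r ?addr0.
by exists f; split=> // b; case: (fD b).
Qed.

Lemma Tmap_spec (X Y : ralg R) (h : X -> Y) : inR_rmorph Y -> alghom h ->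
  alghom (Tmap h) /\ forall x, Tmap h (pT x) = pT (h x) /\ Tmap h (dT x) = dT (h x).
Proof.
move=> hY hh; apply: the_homP.
exact: Tan_lift_hom (presAlg_rmorph _) (alghom_comp hh (pT_hom hY))
  (derivation_comp_hom hh (dT_der Y)).
Qed.

Lemma zeroT_spec (B : ralg R) : inR_rmorph B ->
  alghom (@zeroT R B) /\ forall b : B, zeroT (pT b) = b /\ zeroT (dT b) = 0.
Proof.
move=> hB; apply: the_homP.
exact: Tan_lift_hom hB (@alghom_id _ B) (derivation_zero id).
Qed.

Lemma ellT_spec (B : ralg R) : inR_rmorph B ->
  alghom (@ellT R B) /\ forall b : B,
    [/\ ellT (pT (pT b)) = pT b, ellT (pT (dT b)) = 0,
        ellT (dT (pT b)) = 0 & ellT (dT (dT b)) = dT b].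
Proof.
move=> hB; have hT := presAlg_rmorph (@T_rel R B).
have [f [D [hf hD fD]]] := @Tan_lift_hom_der B (Tan B) (@pT R B) (fun _ => 0)
  (fun _ => 0) (@dT R B) hT (pT_hom hB) (derivation_zero _) (derivation_zero _)
  (derivation2_of_derivation (dT_der B)).
apply: the_homP; have [F [hF FfD]] := Tan_lift_hom hT hf hD.
exists F; split=> // b.
by case: (FfD (pT b)) (FfD (dT b)) (fD b) => -> -> [-> ->] [-> -> -> ->].
Qed.

Lemma cT_spec (B : ralg R) : inR_rmorph B ->
  alghom (@cT R B) /\ forall b : B,
    [/\ cT (pT (pT b)) = pT (pT b), cT (pT (dT b)) = dT (pT b),
        cT (dT (pT b)) = pT (dT b) & cT (dT (dT b)) = dT (dT b)].
Proof.
move=> hB; have hT := presAlg_rmorph (@T_rel R B).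
have hTT := presAlg_rmorph (@T_rel R (Tan B)).
have [f [D [hf hD fD]]] := @Tan_lift_hom_der B (Tan (Tan B))
  (@pT R (Tan B) \o @pT R B) (@dT R (Tan B) \o @pT R B)
  (@pT R (Tan B) \o @dT R B) (@dT R (Tan B) \o @dT R B) hTT
  (alghom_comp (pT_hom hB) (pT_hom hT)) (derivation_comp_hom (pT_hom hB) (dT_der _))
  (hom_comp_derivation (pT_hom hT) (dT_der B)) (derivation2_comp (dT_der B) (dT_der _)).
apply: the_homP; have [F [hF FfD]] := Tan_lift_hom hTT hf hD.
exists F; split=> // b.
by case: (FfD (pT b)) (FfD (dT b)) (fD b) => -> -> [-> ->] [-> -> -> ->].
Qed.

End Tangent.

Section Tensor.
Variables (R : comPzRingType) (B X Y : ralg R) (fX : B -> X) (fY : B -> Y).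

Definition tensl (x : X) : Tens fX fY := pgen (Tens_rel fX fY) (inl x).
Definition tensr (y : Y) : Tens fX fY := pgen (Tens_rel fX fY) (inr y).

Lemma tensE x y : tens fX fY x y = tensl x * tensr y.
Proof. by []. Qed.

Lemma tensl_tensr b : tensl (fX b) = tensr (fY b).
Proof. exact: Defs.eq_pi (c_rel (T_bal _ _ b)). Qed.

Lemma tensl_hom : inR_rmorph X -> alghom tensl.
Proof.
case=> _ _ inR1; split.
- by move=> x y; rewrite /tensl /pgen (Defs.eq_pi (c_rel (TX_add _ _ x y))) piD.
- by move=> x y; rewrite /tensl /pgen (Defs.eq_pi (c_rel (TX_mul _ _ x y))) piM.
- by rewrite -inR1 /tensl /pgen (Defs.eq_pi (c_rel (TX_cst _ _ 1))).
- by move=> r; rewrite /tensl /pgen (Defs.eq_pi (c_rel (TX_cst _ _ r))).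
Qed.

Lemma tensr_hom : inR_rmorph Y -> alghom tensr.
Proof.
case=> _ _ inR1; split.
- by move=> x y; rewrite /tensr /pgen (Defs.eq_pi (c_rel (TY_add _ _ x y))) piD.
- by move=> x y; rewrite /tensr /pgen (Defs.eq_pi (c_rel (TY_mul _ _ x y))) piM.
- by rewrite -inR1 /tensr /pgen (Defs.eq_pi (c_rel (TY_cst _ _ 1))).
- by move=> r; rewrite /tensr /pgen (Defs.eq_pi (c_rel (TY_cst _ _ r))).
Qed.

Lemma Tens_lift_hom_der (Z : ralg R) (g1 e1 : X -> Z) (g2 e2 : Y -> Z) :
  inR_rmorph Z -> alghom g1 -> derivation g1 e1 -> alghom g2 -> derivation g2 e2 ->
  (forall b, g1 (fX b) = g2 (fY b) /\ e1 (fX b) = e2 (fY b)) ->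
  exists f D, [/\ alghom (X := Tens fX fY) f, derivation f D,
    forall x, f (tensl x) = g1 x /\ D (tensl x) = e1 x &
    forall y, f (tensr y) = g2 y /\ D (tensr y) = e2 y].
Proof.
move=> hZ hg1 he1 hg2 he2 bal.
pose v z := match z with inl x => g1 x | inr y => g2 y end.
pose dv z := match z with inl x => e1 x | inr y => e2 y end.
have [|f [D [hf hD fD]]] := @presAlg_lift _ _ (Tens_rel fX fY) Z v dv hZ.
{ move=> t u [] => [x x'|x x'|r|y y'|y y'|r|b] /=; last exact: bal.
  all: by split; rewrite ?(alghomD hg1, alghomM hg1, alghomR hg1, alghomD hg2,
    alghomM hg2, alghomR hg2, derivationD he1, derivationM he1, derivationR he1,
    derivationD he2, derivationM he2, derivationR he2). }
by exists f, D; split=> // [x|y]; [exact: (fD (inl x)) | exact: (fD (inr y))].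
Qed.

End Tensor.

Lemma tensmap_spec (R : comPzRingType) (B X Y B' X' Y' : ralg R) (fX : B -> X)
  (fY : B -> Y) (fX' : B' -> X') (fY' : B' -> Y') (g : X -> X') (h : Y -> Y') :
  inR_rmorph X' -> inR_rmorph Y' -> alghom g -> alghom h ->
  (forall b, tensl fX' fY' (g (fX b)) = tensr fX' fY' (h (fY b))) ->
  alghom (@tensmap R B X Y B' X' Y' fX fY fX' fY' g h) /\
  forall x y, @tensmap R B X Y B' X' Y' fX fY fX' fY' g h (tens fX fY x y) =
              tens fX' fY' (g x) (h y).
Proof.
move=> hX' hY' hg hh bal; apply: the_homP.
have [f [D [hf _ fl fr]]] := Tens_lift_hom_der (fX := fX) (fY := fY) (presAlg_rmorph _)
  (alghom_comp hg (tensl_hom fX' fY' hX')) (derivation_zero _)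
  (alghom_comp hh (tensr_hom fX' fY' hY')) (derivation_zero _)
  (fun b => conj (bal b) (erefl _)).
exists f; split=> // x y.
by rewrite tensE (alghomM hf); case: (fl x) (fr y) => -> _ [-> _].
Qed.

Section SymmetricAlgebra.
Variables (R A : comPzRingType) (iA : {rmorphism R -> A}) (M : lmodType A).
Local Notation q := (@qM R A iA M).
Local Notation s := (@sM R A iA M).
Local Notation pa := (@pA R A iA).
Local Notation tp := (@TpA R A iA).
Local Notation tq := (@TqM R A iA M).
Local Notation TA := (Tan (AlgA iA)).
Local Notation SS := (SymA iA M).

Let hTA : inR_rmorph TA := presAlg_rmorph _.
Let hS : inR_rmorph SS := presAlg_rmorph _.

Lemma AlgA_rmorph : inR_rmorph (AlgA iA).
Proof. by split=> /= [r r'|r r'|]; rewrite ?rmorphD ?rmorphM ?rmorph1. Qed.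

Lemma qM_hom : alghom q.
Proof.
split.
- by move=> a b; rewrite /qM /pgen (Defs.eq_pi (c_rel (S_add _ _ a b))) piD.
- by move=> a b; rewrite /qM /pgen (Defs.eq_pi (c_rel (S_mul _ _ a b))) piM.
- by rewrite /= -(rmorph1 iA) /qM /pgen (Defs.eq_pi (c_rel (S_cst _ _ 1))).
- by move=> r; rewrite /qM /pgen (Defs.eq_pi (c_rel (S_cst _ _ r))).
Qed.

Lemma sMD (m m' : M) : s (m + m') = s m + s m'.
Proof. by rewrite /sM /pgen (Defs.eq_pi (c_rel (S_madd _ m m'))) piD. Qed.

Lemma sMZ (a : A) (m : M) : s (a *: m) = q a * s m.
Proof. by rewrite /sM /pgen (Defs.eq_pi (c_rel (S_scale _ a m))) piM. Qed.

Lemma lambdaM_spec : alghom (@lambdaM R A iA M) /\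
  (forall a, lambdaM (pT (q a)) = q a /\ lambdaM (dT (q a)) = 0) /\
  (forall m, lambdaM (pT (s m)) = 0 /\ lambdaM (dT (s m)) = s m).
Proof.
pose v (z : A + M) : SS := if z is inl a then q a else 0.
pose dv (z : A + M) : SS := if z is inr m then s m else 0.
have [|f [D [hf hD fD]]] := @presAlg_lift _ _ (@S_rel R A iA M) SS v dv hS.
{ move=> t u [] * /=; split;
    rewrite ?(alghomD qM_hom, alghomM qM_hom, sMD, sMZ, mulr0, mul0r, addr0) //.
  exact: (alghomR qM_hom). }
apply: the_homP; have [F [hF FfD]] := Tan_lift_hom hS hf hD.
exists F; split=> //; split=> [a|m].
- by case: (FfD (q a)) (fD (inl a)) => -> -> [].
- by case: (FfD (s m)) (fD (inr m)) => -> -> [].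
Qed.

Lemma TpA_spec : alghom tp /\
  forall a : AlgA iA, tp (pT a) = pT (pa a) /\ tp (dT a) = dT (pa a).
Proof. exact: Tmap_spec (presAlg_rmorph _) (pT_hom AlgA_rmorph). Qed.

Lemma TqM_spec : alghom tq /\
  forall a : AlgA iA, tq (pT a) = pT (q a) /\ tq (dT a) = dT (q a).
Proof. exact: Tmap_spec (presAlg_rmorph _) qM_hom. Qed.

Lemma thetaM_spec : alghom (@thetaM R A iA M) /\
  forall (w : TA) (v : SS),
  thetaM (pT (tens pa q w v)) = tens tp tq (pT w) (pT v) /\
  thetaM (dT (tens pa q w v)) = tens tp tq (dT w) (pT v) + tens tp tq (pT w) (dT v).
Proof.
have hTTA := presAlg_rmorph (@T_rel R TA); have hTS := presAlg_rmorph (@T_rel R SS).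
have [tpH tpE] := TpA_spec; have [tqH tqE] := TqM_spec.
have [|f [D [hf hD fl fr]]] := Tens_lift_hom_der (fX := pa) (fY := q)
  (presAlg_rmorph _)
  (alghom_comp (pT_hom hTA) (tensl_hom tp tq hTTA))
  (hom_comp_derivation (tensl_hom tp tq hTTA) (dT_der TA))
  (alghom_comp (pT_hom hS) (tensr_hom tp tq hTS))
  (hom_comp_derivation (tensr_hom tp tq hTS) (dT_der SS)).
  by move=> a /=; case: (tpE a) (tqE a) => <- <- [<- <-]; split; apply: (tensl_tensr tp tq).
apply: the_homP; have [F [hF FfD]] := Tan_lift_hom (presAlg_rmorph _) hf hD.
exists F; split=> // w v.
rewrite tensE; case: (FfD (tensl pa q w * tensr pa q v)) => -> ->.
rewrite (alghomM hf) (derivationM hD); case: (fl w) (fr v) => -> -> [-> ->].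
by rewrite /= !tensE addrC.
Qed.

Lemma tensmap_T2ATS_spec (g : Tan TA -> TA) (h : Tan SS -> SS) :
  alghom g -> alghom h ->
  (forall a, tensl pa q (g (pT (pa a))) = tensr pa q (h (pT (q a))) /\
             tensl pa q (g (dT (pa a))) = tensr pa q (h (dT (q a)))) ->
  alghom (@tensmap R TA (Tan TA) (Tan SS) (AlgA iA) TA SS tp tq pa q g h) /\
  forall x y, @tensmap R TA (Tan TA) (Tan SS) (AlgA iA) TA SS tp tq pa q g h
    (tens tp tq x y) = tens pa q (g x) (h y).
Proof.
move=> hg hh bal.
have [tpH tpE] := TpA_spec; have [tqH tqE] := TqM_spec.
apply: tensmap_spec => //.
apply: (alghom_pres_eq (alghom_comp tpH (alghom_comp hg (tensl_hom pa q hTA)))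
  (alghom_comp tqH (alghom_comp hh (tensr_hom pa q hS)))).
case=> a /=.
- rewrite -[pgen _ (inl a)]/(pT a).
  by case: (tpE a) (tqE a) (bal a) => -> _ [-> _] [].
- rewrite -[pgen _ (inr a)]/(dT a).
  by case: (tpE a) (tqE a) (bal a) => _ -> [_ ->] [].
Qed.

Lemma ell_tens_zero_spec : alghom (@ell_tens_zero R A iA M) /\
  forall x y, ell_tens_zero (tens tp tq x y) = tens pa q (ellT x) (zeroT y).
Proof.
have [eH eE] := ellT_spec AlgA_rmorph.
have [zH zE] := zeroT_spec hS.
apply: tensmap_T2ATS_spec => // a.
case: (eE a) (zE (q a)) => -> _ -> _ [-> ->]; split; first exact: (tensl_tensr pa q).
by rewrite (alghom0 (tensl_hom pa q hTA)) (alghom0 (tensr_hom pa q hS)).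
Qed.

Lemma zero_tens_lambda_spec : alghom (@zero_tens_lambda R A iA M) /\
  forall x y, zero_tens_lambda (tens tp tq x y) = tens pa q (zeroT x) (lambdaM y).
Proof.
have [zH zE] := zeroT_spec hTA.
have [lH [lE _]] := lambdaM_spec.
apply: tensmap_T2ATS_spec => // a.
case: (zE (pa a)) (lE a) => -> -> [-> ->]; split; first exact: (tensl_tensr pa q).
by rewrite (alghom0 (tensl_hom pa q hTA)) (alghom0 (tensr_hom pa q hS)).
Qed.

End SymmetricAlgebra.

Section Span.
Variables (V : zmodType) (I : Type) (g : I -> V).

Definition in_span (x : V) : Prop := exists s : seq I, x = \sum_(i <- s) g i.

Lemma in_span0 : in_span 0.
Proof. by exists [::]; rewrite big_nil. Qed.

Lemma in_span_gen i : in_span (g i).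
Proof. by exists [:: i]; rewrite big_seq1. Qed.

Lemma in_spanD x y : in_span x -> in_span y -> in_span (x + y).
Proof. by move=> [s ->] [s' ->]; exists (s ++ s'); rewrite big_cat. Qed.

End Span.

Lemma in_span_additive (V W : zmodType) (I J : Type) (g : I -> V) (h : J -> W)
  (f : V -> W) : {morph f : x y / x + y} -> (forall i, in_span h (f (g i))) ->
  forall x, in_span g x -> in_span h (f x).
Proof.
move=> fD fg x [s ->]; elim: s => [|i s IH].
  have f0 : f 0 = 0 by apply: (@addrI _ (f 0)); rewrite -fD !addr0.
  by rewrite big_nil f0; apply: in_span0.
by rewrite big_cons fD; apply: in_spanD.
Qed.

Lemma in_span_biadditive (U V W : zmodType) (I J K : Type) (g : I -> U) (h : J -> V)
  (k : K -> W) (b : U -> V -> W) :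
  (forall y, {morph b^~ y : x x' / x + x'}) -> (forall x, {morph b x : y y' / y + y'}) ->
  (forall i j, in_span k (b (g i) (h j))) ->
  forall x y, in_span g x -> in_span h y -> in_span k (b x y).
Proof.
move=> bDl bDr bgh x y gx hy.
apply: (in_span_additive (f := b^~ y)) gx => // i.
exact: (in_span_additive (f := b (g i))) hy.
Qed.

Definition span_mul_closed (Y : comPzRingType) (I J K : Type) (g : I -> Y)
  (h : J -> Y) (k : K -> Y) : Prop := forall i j, in_span k (g i * h j).

Lemma in_spanM (Y : comPzRingType) (I J K : Type) (g : I -> Y) (h : J -> Y)
  (k : K -> Y) : span_mul_closed g h k ->
  forall x y, in_span g x -> in_span h y -> in_span k (x * y).
Proof.
by move=> ghk; apply: in_span_biadditive => [y x x'|x y y'|]; rewrite ?mulrDl ?mulrDr.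
Qed.

Lemma span_mul_closedC (Y : comPzRingType) (I J K : Type) (g : I -> Y) (h : J -> Y)
  (k : K -> Y) : span_mul_closed g h k -> span_mul_closed h g k.
Proof. by move=> ghk i j; rewrite mulrC. Qed.

Section SpanInduction.
Variables (R : comPzRingType) (G : Type) (rel : term R G -> term R G -> Prop).
Variables (Y : ralg R) (I00 I01 : Type) (g00 : I00 -> Y) (g01 : I01 -> Y).
Hypotheses (g00M : span_mul_closed g00 g00 g00) (g01M : span_mul_closed g00 g01 g01).
Hypothesis g00R : forall r, in_span g00 (inR Y r).

Lemma in_span_derivation2 (I10 I11 : Type) (g10 : I10 -> Y) (g11 : I11 -> Y)
  (f00 f01 f10 f11 : presAlg rel -> Y) :
  span_mul_closed g00 g10 g10 -> span_mul_closed g00 g11 g11 ->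
  span_mul_closed g01 g10 g11 ->
  alghom f00 -> derivation f00 f01 -> derivation f00 f10 ->
  derivation2 f00 f01 f10 f11 ->
  (forall z, [/\ in_span g00 (f00 (pgen rel z)), in_span g01 (f01 (pgen rel z)),
                 in_span g10 (f10 (pgen rel z)) & in_span g11 (f11 (pgen rel z))]) ->
  forall x, [/\ in_span g00 (f00 x), in_span g01 (f01 x),
                in_span g10 (f10 x) & in_span g11 (f11 x)].
Proof.
move=> g10M g11M g0110M h00 h01 h10 [h11D h11M h11R] gen.
elim/pres_ind => [//|r|x y [x00 x01 x10 x11] [y00 y01 y10 y11]|
                        x y [x00 x01 x10 x11] [y00 y01 y10 y11]].
- rewrite (alghomR h00) (derivationR h01) (derivationR h10) h11R.
  by split; [exact: g00R | exact: in_span0 ..].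
- rewrite (alghomD h00) (derivationD h01) (derivationD h10) h11D.
  by split; apply: in_spanD.
rewrite (alghomM h00) (derivationM h01) (derivationM h10) h11M.
split; first exact: (in_spanM g00M).
- apply: in_spanD; first exact: (in_spanM g01M).
  by rewrite mulrC; apply: (in_spanM g01M).
- apply: in_spanD; first exact: (in_spanM g10M).
  by rewrite mulrC; apply: (in_spanM g10M).
apply: in_spanD; last by rewrite mulrC; apply: (in_spanM g11M).
apply: in_spanD; last by rewrite mulrC; apply: (in_spanM g0110M).
by apply: in_spanD; [apply: (in_spanM g11M) | apply: (in_spanM g0110M)].
Qed.

Lemma in_span_derivation (f D : presAlg rel -> Y) :
  alghom f -> derivation f D ->
  (forall z, in_span g00 (f (pgen rel z)) /\ in_span g01 (D (pgen rel z))) ->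
  forall x, in_span g00 (f x) /\ in_span g01 (D x).
Proof.
move=> hf hD gen x.
pose none (v : void) : Y := match v with end.
have none_closed I (g : I -> Y) : span_mul_closed g none none by move=> ? [].
have hD2 : derivation2 f D (fun _ => 0) (fun _ => 0).
  by split=> *; rewrite ?mulr0 ?mul0r ?addr0.
have gen2 z : [/\ in_span g00 (f (pgen rel z)), in_span g01 (D (pgen rel z)),
                  in_span none 0 & in_span none 0].
  by case: (gen z); split=> //; apply: in_span0.
by case: (in_span_derivation2 (none_closed _ _) (none_closed _ _) (none_closed _ _)
  hf hD (derivation_zero f) hD2 gen2 x).
Qed.

End SpanInduction.

Section Connection.
Variables (R A : comPzRingType) (iA : {rmorphism R -> A}) (M : lmodType A).
Local Notation q := (@qM R A iA M).
Local Notation s := (@sM R A iA M).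
Local Notation pa := (@pA R A iA).
Local Notation da := (@dA R A iA).
Local Notation TA := (Tan (AlgA iA)).
Local Notation SS := (SymA iA M).
Local Notation XX := (TAS iA M).
Local Notation tn := (tens pa q).

Let hTA : inR_rmorph TA := presAlg_rmorph _.
Let hS : inR_rmorph SS := presAlg_rmorph _.
Let hX : inR_rmorph XX := presAlg_rmorph _.
Let hpa : alghom pa := pT_hom (AlgA_rmorph iA).
Let htl : alghom (tensl pa q) := tensl_hom pa q hTA.
Let htr : alghom (tensr pa q) := tensr_hom pa q hS.
Let hq : alghom q := qM_hom iA M.

Lemma tens_mul x y x' y' : tn x y * tn x' y' = tn (x * x') (y * y').
Proof. by rewrite !tensE (alghomM htl) (alghomM htr); ring. Qed.

Lemma tens_x1 x : tn x 1 = tensl pa q x.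
Proof. by rewrite tensE (alghom1 htr) mulr1. Qed.

Lemma tens_1y y : tn 1 y = tensr pa q y.
Proof. by rewrite tensE (alghom1 htl) mul1r. Qed.

Lemma tens0l y : tn 0 y = 0.
Proof. by rewrite tensE (alghom0 htl) mul0r. Qed.

Lemma tens0r x : tn x 0 = 0.
Proof. by rewrite tensE (alghom0 htr) mulr0. Qed.

Lemma tensDl y : {morph tn^~ y : x x' / x + x'}.
Proof. by move=> x x'; rewrite !tensE (alghomD htl) mulrDl. Qed.

Lemma tensDr x : {morph tn x : y y' / y + y'}.
Proof. by move=> y y'; rewrite !tensE (alghomD htr) mulrDr. Qed.

Lemma tens_balance x a y : tn (x * pa a) y = tn x (q a * y).
Proof.
rewrite !tensE (alghomM htl) (alghomM htr) (tensl_tensr pa q a).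
by rewrite mulrA.
Qed.

Definition scalarT (a : A) : TA := pa a.
Definition formT (p : A * A) : TA := pa p.1 * da p.2.
Definition scalarS (a : A) : SS := q a.
Definition vectorS (p : A * M) : SS := q p.1 * s p.2.
Definition tensgen (I J : Type) (gT : I -> TA) (gS : J -> SS) (p : I * J) : XX :=
  tn (gT p.1) (gS p.2).

Lemma scalarT_mul : span_mul_closed scalarT scalarT scalarT.
Proof. by move=> a b; rewrite -(alghomM hpa); apply: in_span_gen. Qed.

Lemma formT_mul : span_mul_closed scalarT formT formT.
Proof.
move=> a p; rewrite /scalarT /formT mulrA -(alghomM hpa).
exact: (in_span_gen formT (a * p.1, p.2)).
Qed.

Lemma scalarS_mul : span_mul_closed scalarS scalarS scalarS.
Proof. by move=> a b; rewrite -(alghomM hq); apply: in_span_gen. Qed.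

Lemma vectorS_mul : span_mul_closed scalarS vectorS vectorS.
Proof.
move=> a p; rewrite /scalarS /vectorS mulrA -(alghomM hq).
exact: (in_span_gen vectorS (a * p.1, p.2)).
Qed.

Lemma scalarT_R r : in_span scalarT (inR TA r).
Proof. by rewrite -(alghomR hpa); apply: in_span_gen. Qed.

Lemma scalarS_R r : in_span scalarS (inR SS r).
Proof. by rewrite -(alghomR hq); apply: in_span_gen. Qed.

Lemma in_span_tens (I J : Type) (gT : I -> TA) (gS : J -> SS) x y :
  in_span gT x -> in_span gS y -> in_span (tensgen gT gS) (tn x y).
Proof.
apply: in_span_biadditive => [|x'|i j]; [exact: tensDl | exact: tensDr |].
exact: (in_span_gen (tensgen gT gS) (i, j)).
Qed.

Lemma tensgen_mul (I I' I'' J J' J'' : Type) (gT : I -> TA) (gT' : I' -> TA)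
  (gT'' : I'' -> TA) (gS : J -> SS) (gS' : J' -> SS) (gS'' : J'' -> SS) :
  span_mul_closed gT gT' gT'' -> span_mul_closed gS gS' gS'' ->
  span_mul_closed (tensgen gT gS) (tensgen gT' gS') (tensgen gT'' gS'').
Proof. by move=> gTM gSM i j; rewrite /tensgen tens_mul; apply: in_span_tens. Qed.

Lemma ellT_span w : in_span scalarT (ellT (pT w)) /\ in_span formT (ellT (dT w)).
Proof.
have [eH eE] := ellT_spec (AlgA_rmorph iA).
have [|//] := in_span_derivation scalarT_mul formT_mul scalarT_R
  (alghom_comp (pT_hom hTA) eH) (hom_comp_derivation eH (dT_der TA)) _ w.
case=> a /=.
- rewrite -[pgen _ (inl a)]/(pT a); case: (eE a) => -> _ -> _.
  by split; [apply: in_span_gen | apply: in_span0].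
- rewrite -[pgen _ (inr a)]/(dT a); case: (eE a) => _ -> _ ->.
  split; first exact: in_span0.
  by rewrite -[dT a]mul1r -(alghom1 hpa); apply: (in_span_gen formT (1, a)).
Qed.

Lemma lambdaM_span v :
  in_span scalarS (lambdaM (pT v)) /\ in_span vectorS (lambdaM (dT v)).
Proof.
have [lH [lEq lEs]] := lambdaM_spec iA M.
have [|//] := in_span_derivation scalarS_mul vectorS_mul scalarS_R
  (alghom_comp (pT_hom hS) lH) (hom_comp_derivation lH (dT_der SS)) _ v.
case=> [a|m] /=.
- rewrite -[pgen _ (inl a)]/(q a); case: (lEq a) => -> ->.
  by split; [apply: in_span_gen | apply: in_span0].
- rewrite -[pgen _ (inr m)]/(s m); case: (lEs m) => -> ->.
  split; first exact: in_span0.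
  by rewrite -[s m]mul1r -(alghom1 hq); apply: (in_span_gen vectorS (1, m)).
Qed.

Definition ell_theta (z : Tan XX) : XX := ell_tens_zero (thetaM z).
Definition lambda_theta (z : Tan XX) : XX := zero_tens_lambda (thetaM z).

Lemma ell_theta_hom : alghom ell_theta.
Proof. exact: alghom_comp (proj1 (thetaM_spec iA M)) (proj1 (ell_tens_zero_spec iA M)). Qed.

Lemma lambda_theta_hom : alghom lambda_theta.
Proof.
exact: alghom_comp (proj1 (thetaM_spec iA M)) (proj1 (zero_tens_lambda_spec iA M)).
Qed.

Lemma ell_theta_tens w v :
  ell_theta (pT (tn w v)) = tn (ellT (pT w)) v /\
  ell_theta (dT (tn w v)) = tn (ellT (dT w)) v.
Proof.
have [_ zE] := zeroT_spec hS; have [[eD _ _ _] eE] := ell_tens_zero_spec iA M.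
rewrite /ell_theta; case: (proj2 (thetaM_spec iA M) w v) => -> ->.
by rewrite eD !eE; case: (zE v) => -> ->; rewrite tens0r addr0.
Qed.

Lemma lambda_theta_tens w v :
  lambda_theta (pT (tn w v)) = tn w (lambdaM (pT v)) /\
  lambda_theta (dT (tn w v)) = tn w (lambdaM (dT v)).
Proof.
have [_ zE] := zeroT_spec hTA; have [[eD _ _ _] eE] := zero_tens_lambda_spec iA M.
rewrite /lambda_theta; case: (proj2 (thetaM_spec iA M) w v) => -> ->.
by rewrite eD !eE; case: (zE w) => -> ->; rewrite tens0l add0r.
Qed.

Lemma ell_lambda_tens_span w v :
  [/\ in_span (tensgen scalarT scalarS) (lambda_theta (pT (ell_theta (pT (tn w v))))),
      in_span (tensgen scalarT vectorS) (lambda_theta (dT (ell_theta (pT (tn w v))))),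
      in_span (tensgen formT scalarS) (lambda_theta (pT (ell_theta (dT (tn w v))))) &
      in_span (tensgen formT vectorS) (lambda_theta (dT (ell_theta (dT (tn w v)))))].
Proof.
case: (ell_theta_tens w v) => -> ->.
case: (lambda_theta_tens (ellT (pT w)) v) (lambda_theta_tens (ellT (dT w)) v) => -> -> [-> ->].
by case: (ellT_span w) (lambdaM_span v) => ? ? [? ?]; split; apply: in_span_tens.
Qed.

Lemma ell_lambda_span z :
  [/\ in_span (tensgen scalarT scalarS) (lambda_theta (pT (ell_theta (pT z)))),
      in_span (tensgen scalarT vectorS) (lambda_theta (dT (ell_theta (pT z)))),
      in_span (tensgen formT scalarS) (lambda_theta (pT (ell_theta (dT z)))) &
      in_span (tensgen formT vectorS) (lambda_theta (dT (ell_theta (dT z))))].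
Proof.
have hphi := alghom_comp (pT_hom hX) ell_theta_hom.
have hdelta := hom_comp_derivation ell_theta_hom (dT_der XX).
have hpsi := alghom_comp (pT_hom hX) lambda_theta_hom.
have heps := hom_comp_derivation lambda_theta_hom (dT_der XX).
have [r||//] := in_span_derivation2 (tensgen_mul scalarT_mul scalarS_mul)
  (tensgen_mul scalarT_mul vectorS_mul) _ (tensgen_mul formT_mul scalarS_mul)
  (tensgen_mul formT_mul vectorS_mul)
  (tensgen_mul formT_mul (span_mul_closedC vectorS_mul)) (alghom_comp hphi hpsi)
  (derivation_comp_hom hphi heps) (hom_comp_derivation hpsi hdelta)
  (derivation2_comp hdelta heps) _ z.
- rewrite -(alghomR htl) -tens_x1 -(alghom1 hq).
  by apply: in_span_tens; [apply: scalarT_R | apply: in_span_gen].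
case=> [w|v] /=.
- by rewrite -[pgen _ (inl w)]/(tensl pa q w) -tens_x1; apply: ell_lambda_tens_span.
- by rewrite -[pgen _ (inr v)]/(tensr pa q v) -tens_1y; apply: ell_lambda_tens_span.
Qed.

Lemma OmegaTensM_span x :
  in_span (tensgen formT vectorS) x -> OmegaTensM x.
Proof.
apply: (in_span_additive (f := id)) => // -[[a a'] [b m]].
rewrite /tensgen /formT /vectorS /= -tens_balance mulrAC -(alghomM hpa).
exact: (in_span_gen _ ((a * b, a'), m)).
Qed.

Section Nabla.
Variable H : Tan SS -> XX.
Hypothesis hH : horizontal_connection H.
Local Notation nabla m := (H (dT (s m))).

Lemma nablaD m m' : nabla (m + m') = nabla m + nabla m'.
Proof.
case: hH => hHh _ _ _ _.
by rewrite sMD (derivationD (dT_der SS)) (alghomD hHh).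
Qed.

Lemma nablaZ (a : A) m : nabla (a *: m) = actA a (nabla m) + tn (da a) (s m).
Proof.
case: hH => hHh H1 H2 _ _.
rewrite sMZ (derivationM (dT_der SS)) (alghomD hHh) !(alghomM hHh) !H2.
have [_ tqE] := TqM_spec iA M; case: (tqE a) => _ <-.
by rewrite H1 /actA -[pa a]mul1r tens_balance tens_mul mul1r !mulr1.
Qed.

Lemma nablaZ_R r m : nabla (iA r *: m) = inR XX r * nabla m.
Proof.
rewrite nablaZ /actA.
have -> : da (iA r) = 0 := derivationR (dT_der (AlgA iA)) r.
have -> : pa (iA r) = inR TA r := alghomR hpa r.
by rewrite tens0l addr0 tens_x1 (alghomR htl).
Qed.

Lemma nabla_omega m : OmegaTensM (nabla m).
Proof.
case: hH => hHh _ _ H3 H4.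
have [_ THE] := Tmap_spec hX hHh.
have [_ eE] := ellT_spec hS; have [_ cE] := cT_spec hS.
have [lH [_ lEs]] := lambdaM_spec iA M; have [_ TlE] := Tmap_spec hS lH.
have ell_fix : ell_theta (dT (nabla m)) = nabla m.
  by have := H3 (dT (dT (s m))); rewrite (proj2 (THE _)); case: (eE (s m)) => _ _ _ ->.
have lambda_fix : lambda_theta (dT (nabla m)) = nabla m.
  have := H4 (dT (dT (s m))); rewrite (proj2 (THE _)).
  by case: (cE (s m)) => _ _ _ ->; rewrite (proj2 (TlE _)); case: (lEs m) => _ ->.
apply: OmegaTensM_span; rewrite -lambda_fix -{1}ell_fix.
by case: (ell_lambda_span (nabla m)).
Qed.

End Nabla.
End Connection.

Theorem mainTheorem7 (R A : comPzRingType) (iA : {rmorphism R -> A})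
  (M : lmodType A) (H : Tan (SymA iA M) -> TAS iA M) :
  horizontal_connection H ->
  module_connection (fun m : M => H (dT (sM iA m))).
Proof.
move=> hH; split.
- exact: nabla_omega hH.
- exact: nablaD hH.
- exact: nablaZ_R hH.
- exact: nablaZ hH.
Qed.
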